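(* Let $X$ be a symmetric monoidal bicategory. For objects $x,y$ let $t_{xy}:R^{\cdot}_{xy}\Rightarrow R_{yx}$ be the unique invertible 2-cell (from the uniqueness of adjoints) such that the composite $v_{yx}\cdot(1_{R_{xy}}*t_{xy}):R_{xy}\circ R^{\cdot}_{xy}\Rightarrow R_{xy}\circ R_{yx}\Rightarrow 1_{y\otimes x}$ equals the counit $\varepsilon_{xy}:R_{xy}\circ R^{\cdot}_{xy}\Rightarrow 1_{y\otimes x}$. Then the components $t_{xy}$ define a modification from the pseudonatural transformation $R^{\cdot}$ (components $R^{\cdot}_{xy}:y\otimes x\to x\otimes y$) to the pseudonatural transformation with components $R_{yx}:y\otimes x\to x\otimes y$.
   Context: In a symmetric monoidal bicategory the braiding is a pseudonatural adjoint equivalence with components $R_{xy}:x\otimes y\to y\otimes x$, chosen adjoint pseudo-inverses $R^{\cdot}_{xy}:y\otimes x\to x\otimes y$ with unit $\eta_{xy}$ and counit $\varepsilon_{xy}:R_{xy}R^{\cdot}_{xy}\Rightarrow 1$; the syllepsis $v$ has components $v_{xy}:R_{yx}R_{xy}\Rightarrow 1_{x\otimes y}$ and satisfies the syllepsis and symmetry axioms. By the symmetry axiom, $R_{xy}\dashv R_{yx}$ is also an adjoint equivalence with unit $v_{xy}^{-1}$ and counit $v_{yx}$, which is why $t_{xy}$ exists and is unique. A modification between pseudonatural transformations is a family of 2-cells compatible with the naturality 2-cells of the two transformations. *)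

Set Implicit Arguments.
Set Universe Polymorphism.

Record BicatOps := {
  ob : Type;
  hom : ob -> ob -> Type;
  cell : forall a b, hom a b -> hom a b -> Type;
  id1 : forall a, hom a a;
  comp : forall a b c, hom b c -> hom a b -> hom a c;
  id2 : forall a b (f : hom a b), cell f f;
  vcomp : forall a b (f g h : hom a b), cell g h -> cell f g -> cell f h;
  hcomp : forall a b c (g g' : hom b c) (f f' : hom a b),
      cell g g' -> cell f f' -> cell (comp g f) (comp g' f');
  assoc : forall a b c d (h : hom c d) (g : hom b c) (f : hom a b),
      cell (comp h (comp g f)) (comp (comp h g) f);
  assoc_inv : forall a b c d (h : hom c d) (g : hom b c) (f : hom a b),
      cell (comp (comp h g) f) (comp h (comp g f));
  lunit : forall a b (f : hom a b), cell (comp (id1 b) f) f;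
  lunit_inv : forall a b (f : hom a b), cell f (comp (id1 b) f);
  runit : forall a b (f : hom a b), cell (comp f (id1 a)) f;
  runit_inv : forall a b (f : hom a b), cell f (comp f (id1 a))
}.

Arguments ob : clear implicits.
Arguments hom {B} a b : rename.
Arguments cell {B a b} f g : rename.
Arguments id1 {B} a : rename.
Arguments comp {B a b c} g f : rename.
Arguments id2 {B a b} f : rename.
Arguments vcomp {B a b f g h} beta alpha : rename.
Arguments hcomp {B a b c g g' f f'} beta alpha : rename.
Arguments assoc {B a b c d} h g f : rename.
Arguments assoc_inv {B a b c d} h g f : rename.
Arguments lunit {B a b} f : rename.
Arguments lunit_inv {B a b} f : rename.
Arguments runit {B a b} f : rename.
Arguments runit_inv {B a b} f : rename.

Definition whiskerL {B : BicatOps} {a b c : ob B} (h : hom b c) {f f' : hom a b}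
  (alpha : cell f f') : cell (comp h f) (comp h f') := hcomp (id2 h) alpha.
Definition whiskerR {B : BicatOps} {a b c : ob B} {g g' : hom b c}
  (alpha : cell g g') (h : hom a b) : cell (comp g h) (comp g' h) :=
  hcomp alpha (id2 h).

Definition is_inverse {B : BicatOps} {a b : ob B} {f g : hom a b}
  (alpha : cell f g) (beta : cell g f) : Prop :=
  vcomp beta alpha = id2 f /\ vcomp alpha beta = id2 g.

Record BicatAxioms (B : BicatOps) : Prop := {
  vcomp_assoc : forall (a b : ob B) (f g h k : hom a b) (al : cell f g) (be : cell g h)
      (ga : cell h k), vcomp ga (vcomp be al) = vcomp (vcomp ga be) al;
  vcomp_id_l : forall (a b : ob B) (f g : hom a b) (al : cell f g), vcomp (id2 g) al = al;
  vcomp_id_r : forall (a b : ob B) (f g : hom a b) (al : cell f g), vcomp al (id2 f) = al;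
  hcomp_id : forall (a b c : ob B) (g : hom b c) (f : hom a b),
      hcomp (id2 g) (id2 f) = id2 (comp g f);
  interchange : forall (a b c : ob B) (g g' g'' : hom b c) (f f' f'' : hom a b)
      (be : cell g g') (be' : cell g' g'') (al : cell f f') (al' : cell f' f''),
      hcomp (vcomp be' be) (vcomp al' al) = vcomp (hcomp be' al') (hcomp be al);
  assoc_nat : forall (a b c d : ob B) (h h' : hom c d) (g g' : hom b c) (f f' : hom a b)
      (ga : cell h h') (be : cell g g') (al : cell f f'),
      vcomp (assoc h' g' f') (hcomp ga (hcomp be al))
      = vcomp (hcomp (hcomp ga be) al) (assoc h g f);
  assoc_iso : forall (a b c d : ob B) (h : hom c d) (g : hom b c) (f : hom a b),
      is_inverse (assoc h g f) (assoc_inv h g f);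
  lunit_nat : forall (a b : ob B) (f f' : hom a b) (al : cell f f'),
      vcomp (lunit f') (hcomp (id2 (id1 b)) al) = vcomp al (lunit f);
  lunit_iso : forall (a b : ob B) (f : hom a b), is_inverse (lunit f) (lunit_inv f);
  runit_nat : forall (a b : ob B) (f f' : hom a b) (al : cell f f'),
      vcomp (runit f') (hcomp al (id2 (id1 a))) = vcomp al (runit f);
  runit_iso : forall (a b : ob B) (f : hom a b), is_inverse (runit f) (runit_inv f);
  pentagon : forall (a b c d e : ob B) (k : hom d e) (h : hom c d) (g : hom b c) (f : hom a b),
      vcomp (assoc (comp k h) g f) (assoc k h (comp g f))
      = vcomp (whiskerR (assoc k h g) f)
          (vcomp (assoc k (comp h g) f) (whiskerL k (assoc h g f)));
  triangle : forall (a b c : ob B) (g : hom b c) (f : hom a b),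
      vcomp (whiskerR (runit g) f) (assoc g (id1 b) f) = whiskerL g (lunit f)
}.

Record Bicat := { bops :> BicatOps; baxioms : BicatAxioms bops }.

Section Helpers.
Context {B : BicatOps}.

(* naturality cell of a composite of two transformations *)
Definition comp_nat {A A' Bo Bo' C C' : ob B}
  {sg : hom A Bo} {sg' : hom A' Bo'} {tau : hom Bo C} {tau' : hom Bo' C'}
  {h : hom A A'} {k : hom Bo Bo'} {l : hom C C'}
  (n1 : cell (comp k sg) (comp sg' h)) (n2 : cell (comp l tau) (comp tau' k))
  : cell (comp l (comp tau sg)) (comp (comp tau' sg') h) :=
  vcomp (assoc tau' sg' h) (vcomp (whiskerL tau' n1)
    (vcomp (assoc_inv tau' k sg) (vcomp (whiskerR n2 sg) (assoc l tau sg)))).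

(* naturality cell of the identity transformation *)
Definition id_nat {C C' : ob B} (l : hom C C') : cell (comp l (id1 C)) (comp (id1 C') l) :=
  vcomp (lunit_inv l) (runit l).

Definition paste {A A' A'' X X' X'' : ob B}
  {sg : hom A X} {sg' : hom A' X'} {sg'' : hom A'' X''}
  {h : hom A A'} {h' : hom A' A''} {k : hom X X'} {k' : hom X' X''}
  (n1 : cell (comp k sg) (comp sg' h)) (n2 : cell (comp k' sg') (comp sg'' h'))
  : cell (comp (comp k' k) sg) (comp sg'' (comp h' h)) :=
  vcomp (assoc_inv sg'' h' h) (vcomp (whiskerR n2 h)
    (vcomp (assoc k' sg' h) (vcomp (whiskerL k' n1) (assoc_inv k' k sg)))).

Definition mod_square {A A' X X' : ob B}
  {sg rho : hom A X} {sg' rho' : hom A' X'} {h : hom A A'} {k : hom X X'}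
  (m : cell sg rho) (m' : cell sg' rho')
  (n1 : cell (comp k sg) (comp sg' h)) (n2 : cell (comp k rho) (comp rho' h)) : Prop :=
  vcomp (whiskerR m' h) n1 = vcomp n2 (whiskerL k m).
End Helpers.

Record SymOps (B : Bicat) := {
  tens : ob B -> ob B -> ob B;
  tens1 : forall a a' b b', hom a a' -> hom b b' -> hom (tens a b) (tens a' b');
  tens2 : forall (a a' b b' : ob B) (f f' : hom a a') (g g' : hom b b'),
      cell f f' -> cell g g' -> cell (tens1 _ _ _ _ f g) (tens1 _ _ _ _ f' g');
  tphi : forall (a a' a'' b b' b'' : ob B) (f : hom a a') (f' : hom a' a'')
      (g : hom b b') (g' : hom b' b''),
      cell (comp (tens1 _ _ _ _ f' g') (tens1 _ _ _ _ f g)) (tens1 _ _ _ _ (comp f' f) (comp g' g));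
  tphi_inv : forall (a a' a'' b b' b'' : ob B) (f : hom a a') (f' : hom a' a'')
      (g : hom b b') (g' : hom b' b''),
      cell (tens1 _ _ _ _ (comp f' f) (comp g' g)) (comp (tens1 _ _ _ _ f' g') (tens1 _ _ _ _ f g));
  tiota : forall a b, cell (id1 (tens a b)) (tens1 _ _ _ _ (id1 a) (id1 b));
  tiota_inv : forall a b, cell (tens1 _ _ _ _ (id1 a) (id1 b)) (id1 (tens a b));
  R : forall a b, hom (tens a b) (tens b a);
  Rn : forall (a a' b b' : ob B) (f : hom a a') (g : hom b b'),
      cell (comp (tens1 _ _ _ _ g f) (R a b)) (comp (R a' b') (tens1 _ _ _ _ f g));
  Rn_inv : forall (a a' b b' : ob B) (f : hom a a') (g : hom b b'),
      cell (comp (R a' b') (tens1 _ _ _ _ f g)) (comp (tens1 _ _ _ _ g f) (R a b));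
  (* chosen adjoint pseudo-inverse R^. , pseudonatural *)
  Rd : forall a b, hom (tens b a) (tens a b);
  Rdn : forall (a a' b b' : ob B) (f : hom a a') (g : hom b b'),
      cell (comp (tens1 _ _ _ _ f g) (Rd a b)) (comp (Rd a' b') (tens1 _ _ _ _ g f));
  Rdn_inv : forall (a a' b b' : ob B) (f : hom a a') (g : hom b b'),
      cell (comp (Rd a' b') (tens1 _ _ _ _ g f)) (comp (tens1 _ _ _ _ f g) (Rd a b));
  eta : forall a b, cell (id1 (tens a b)) (comp (Rd a b) (R a b));
  eta_inv : forall a b, cell (comp (Rd a b) (R a b)) (id1 (tens a b));
  eps : forall a b, cell (comp (R a b) (Rd a b)) (id1 (tens b a));
  eps_inv : forall a b, cell (id1 (tens b a)) (comp (R a b) (Rd a b));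
  (* syllepsis v_{ab} : R_{ba} R_{ab} => 1 *)
  syl : forall a b, cell (comp (R b a) (R a b)) (id1 (tens a b));
  syl_inv : forall a b, cell (id1 (tens a b)) (comp (R b a) (R a b))
}.

Arguments tens {B} s a b : rename.
Arguments tens1 {B} s {a a' b b'} f g : rename.
Arguments tens2 {B} s {a a' b b' f f' g g'} al be : rename.
Arguments tphi {B} s {a a' a'' b b' b''} f f' g g' : rename.
Arguments tphi_inv {B} s {a a' a'' b b' b''} f f' g g' : rename.
Arguments tiota {B} s a b : rename.
Arguments tiota_inv {B} s a b : rename.
Arguments R {B} s a b : rename.
Arguments Rn {B} s {a a' b b'} f g : rename.
Arguments Rn_inv {B} s {a a' b b'} f g : rename.
Arguments Rd {B} s a b : rename.
Arguments Rdn {B} s {a a' b b'} f g : rename.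
Arguments Rdn_inv {B} s {a a' b b'} f g : rename.
Arguments eta {B} s a b : rename.
Arguments eta_inv {B} s a b : rename.
Arguments eps {B} s a b : rename.
Arguments eps_inv {B} s a b : rename.
Arguments syl {B} s a b : rename.
Arguments syl_inv {B} s a b : rename.

Record SymAxioms (B : Bicat) (s : SymOps B) : Prop := {
  tens2_id : forall (a a' b b' : ob B) (f : hom a a') (g : hom b b'),
      tens2 s (id2 f) (id2 g) = id2 (tens1 s f g);
  tens2_vcomp : forall (a a' b b' : ob B) (f f' f'' : hom a a') (g g' g'' : hom b b')
      (al : cell f f') (al' : cell f' f'') (be : cell g g') (be' : cell g' g''),
      tens2 s (vcomp al' al) (vcomp be' be) = vcomp (tens2 s al' be') (tens2 s al be);
  tphi_nat : forall (a a' a'' b b' b'' : ob B) (f1 f2 : hom a a') (f1' f2' : hom a' a'')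
      (g1 g2 : hom b b') (g1' g2' : hom b' b'')
      (al : cell f1 f2) (al' : cell f1' f2') (be : cell g1 g2) (be' : cell g1' g2'),
      vcomp (tphi s f2 f2' g2 g2') (hcomp (tens2 s al' be') (tens2 s al be))
      = vcomp (tens2 s (hcomp al' al) (hcomp be' be)) (tphi s f1 f1' g1 g1');
  tphi_iso : forall (a a' a'' b b' b'' : ob B) (f : hom a a') (f' : hom a' a'')
      (g : hom b b') (g' : hom b' b''),
      is_inverse (tphi s f f' g g') (tphi_inv s f f' g g');
  tiota_iso : forall a b, is_inverse (tiota s a b) (tiota_inv s a b);
  tphi_assoc : forall a0 a1 a2 a3 b0 b1 b2 b3
      (f1 : hom a0 a1) (f2 : hom a1 a2) (f3 : hom a2 a3)
      (g1 : hom b0 b1) (g2 : hom b1 b2) (g3 : hom b2 b3),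
      vcomp (tens2 s (assoc f3 f2 f1) (assoc g3 g2 g1))
        (vcomp (tphi s (comp f2 f1) f3 (comp g2 g1) g3)
               (whiskerL (tens1 s f3 g3) (tphi s f1 f2 g1 g2)))
      = vcomp (tphi s f1 (comp f3 f2) g1 (comp g3 g2))
          (vcomp (whiskerR (tphi s f2 f3 g2 g3) (tens1 s f1 g1))
                 (assoc (tens1 s f3 g3) (tens1 s f2 g2) (tens1 s f1 g1)));
  tphi_lunit : forall (a a' b b' : ob B) (f : hom a a') (g : hom b b'),
      vcomp (tens2 s (lunit f) (lunit g))
        (vcomp (tphi s f (id1 a') g (id1 b')) (whiskerR (tiota s a' b') (tens1 s f g)))
      = lunit (tens1 s f g);
  tphi_runit : forall (a a' b b' : ob B) (f : hom a a') (g : hom b b'),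
      vcomp (tens2 s (runit f) (runit g))
        (vcomp (tphi s (id1 a) f (id1 b) g) (whiskerL (tens1 s f g) (tiota s a b)))
      = runit (tens1 s f g);
  Rn_iso : forall (a a' b b' : ob B) (f : hom a a') (g : hom b b'),
      is_inverse (Rn s f g) (Rn_inv s f g);
  Rn_nat : forall (a a' b b' : ob B) (f f' : hom a a') (g g' : hom b b')
      (al : cell f f') (be : cell g g'),
      vcomp (Rn s f' g') (whiskerR (tens2 s be al) (R s a b))
      = vcomp (whiskerL (R s a' b') (tens2 s al be)) (Rn s f g);
  Rn_comp : forall (a a' a'' b b' b'' : ob B) (f : hom a a') (f' : hom a' a'')
      (g : hom b b') (g' : hom b' b''),
      vcomp (whiskerL (R s a'' b'') (tphi s f f' g g')) (paste (Rn s f g) (Rn s f' g'))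
      = vcomp (Rn s (comp f' f) (comp g' g)) (whiskerR (tphi s g g' f f') (R s a b));
  Rn_unit : forall a b,
      vcomp (Rn s (id1 a) (id1 b)) (whiskerR (tiota s b a) (R s a b))
      = vcomp (whiskerL (R s a b) (tiota s a b))
          (vcomp (runit_inv (R s a b)) (lunit (R s a b)));
  Rdn_iso : forall (a a' b b' : ob B) (f : hom a a') (g : hom b b'),
      is_inverse (Rdn s f g) (Rdn_inv s f g);
  Rdn_nat : forall (a a' b b' : ob B) (f f' : hom a a') (g g' : hom b b')
      (al : cell f f') (be : cell g g'),
      vcomp (Rdn s f' g') (whiskerR (tens2 s al be) (Rd s a b))
      = vcomp (whiskerL (Rd s a' b') (tens2 s be al)) (Rdn s f g);
  Rdn_comp : forall (a a' a'' b b' b'' : ob B) (f : hom a a') (f' : hom a' a'')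
      (g : hom b b') (g' : hom b' b''),
      vcomp (whiskerL (Rd s a'' b'') (tphi s g g' f f')) (paste (Rdn s f g) (Rdn s f' g'))
      = vcomp (Rdn s (comp f' f) (comp g' g)) (whiskerR (tphi s f f' g g') (Rd s a b));
  Rdn_unit : forall a b,
      vcomp (Rdn s (id1 a) (id1 b)) (whiskerR (tiota s a b) (Rd s a b))
      = vcomp (whiskerL (Rd s a b) (tiota s b a))
          (vcomp (runit_inv (Rd s a b)) (lunit (Rd s a b)));
  (* eta : 1 => R^. R and eps : R R^. => 1 are invertible modifications
     forming an adjoint equivalence R -| R^. *)
  eta_iso : forall a b, is_inverse (eta s a b) (eta_inv s a b);
  eps_iso : forall a b, is_inverse (eps s a b) (eps_inv s a b);
  eta_mod : forall (a a' b b' : ob B) (f : hom a a') (g : hom b b'),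
      mod_square (eta s a b) (eta s a' b') (id_nat (tens1 s f g))
        (comp_nat (Rn s f g) (Rdn s f g));
  eps_mod : forall (a a' b b' : ob B) (f : hom a a') (g : hom b b'),
      mod_square (eps s a b) (eps s a' b') (comp_nat (Rdn s f g) (Rn s f g))
        (id_nat (tens1 s g f));
  triangle1 : forall a b,
      vcomp (lunit (R s a b)) (vcomp (whiskerR (eps s a b) (R s a b))
        (vcomp (assoc (R s a b) (Rd s a b) (R s a b))
          (vcomp (whiskerL (R s a b) (eta s a b)) (runit_inv (R s a b)))))
      = id2 (R s a b);
  triangle2 : forall a b,
      vcomp (runit (Rd s a b)) (vcomp (whiskerL (Rd s a b) (eps s a b))
        (vcomp (assoc_inv (Rd s a b) (R s a b) (Rd s a b))
          (vcomp (whiskerR (eta s a b) (Rd s a b)) (lunit_inv (Rd s a b)))))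
      = id2 (Rd s a b);
  syl_iso : forall a b, is_inverse (syl s a b) (syl_inv s a b);
  syl_mod : forall (a a' b b' : ob B) (f : hom a a') (g : hom b b'),
      mod_square (syl s a b) (syl s a' b') (comp_nat (Rn s f g) (Rn s g f))
        (id_nat (tens1 s f g));
  symmetry : forall a b,
      vcomp (lunit (R s a b)) (vcomp (whiskerR (syl s b a) (R s a b))
        (assoc (R s a b) (R s b a) (R s a b)))
      = vcomp (runit (R s a b)) (whiskerL (R s a b) (syl s a b))
}.

(* Whiskering on the left by the braiding R_{a'b'} is injective, because R_{a'b'} has the
   invertible syllepsis v_{a'b'} : R_{b'a'} R_{a'b'} => 1 as a left inverse.  After whiskering
   by R_{a'b'} and composing with the invertible cell v_{b'a'}, both sides of the modification
   axiom for t become expressions in a counit (v_{b'a'} (1 * t_{a'b'}) = eps_{a'b'} on one side,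
   v_{ba} (1 * t_{ab}) = eps_{ab} on the other), and the modification axioms of eps and of v
   rewrite both into the same cell built from eps_{ab} and the inverse of the naturality cell
   of R. *)

Section BicategoryFacts.
Context {B : Bicat}.

Lemma vcompA {a b : ob B} {f g h k : hom a b} (al : cell f g) (be : cell g h) (ga : cell h k) :
  vcomp ga (vcomp be al) = vcomp (vcomp ga be) al.
Proof. apply (vcomp_assoc (baxioms B)). Qed.

Lemma vcomp_idl {a b : ob B} {f g : hom a b} (al : cell f g) : vcomp (id2 g) al = al.
Proof. apply (vcomp_id_l (baxioms B)). Qed.

Lemma vcomp_idr {a b : ob B} {f g : hom a b} (al : cell f g) : vcomp al (id2 f) = al.
Proof. apply (vcomp_id_r (baxioms B)). Qed.

Lemma whiskerL_vcomp {a b c : ob B} (h : hom b c) {f f' f'' : hom a b}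
  (x : cell f f') (y : cell f' f'') :
  whiskerL h (vcomp y x) = vcomp (whiskerL h y) (whiskerL h x).
Proof. unfold whiskerL. rewrite <- (interchange (baxioms B)), vcomp_idl. reflexivity. Qed.

Lemma whiskerR_vcomp {a b c : ob B} {g g' g'' : hom b c} (x : cell g g') (y : cell g' g'')
  (h : hom a b) :
  whiskerR (vcomp y x) h = vcomp (whiskerR y h) (whiskerR x h).
Proof. unfold whiskerR. rewrite <- (interchange (baxioms B)), vcomp_idl. reflexivity. Qed.

Lemma whiskerR_id2 {a b c : ob B} (g : hom b c) (f : hom a b) :
  whiskerR (id2 g) f = id2 (comp g f).
Proof. apply (hcomp_id (baxioms B)). Qed.

Lemma whisker_exchange {a b c : ob B} {g g' : hom b c} {f f' : hom a b}
  (be : cell g g') (al : cell f f') :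
  vcomp (whiskerR be f') (whiskerL g al) = vcomp (whiskerL g' al) (whiskerR be f).
Proof.
  unfold whiskerR, whiskerL.
  rewrite <- !(interchange (baxioms B)), !vcomp_idl, !vcomp_idr. reflexivity.
Qed.

Lemma assoc_whiskerL_whiskerL {a b c d : ob B} (h : hom c d) (g : hom b c) {f f' : hom a b}
  (al : cell f f') :
  vcomp (assoc h g f') (whiskerL h (whiskerL g al))
  = vcomp (whiskerL (comp h g) al) (assoc h g f).
Proof. unfold whiskerL. rewrite (assoc_nat (baxioms B)), (hcomp_id (baxioms B)). reflexivity. Qed.

Lemma assoc_whiskerL_whiskerR {a b c d : ob B} (h : hom c d) {g g' : hom b c}
  (be : cell g g') (f : hom a b) :
  vcomp (assoc h g' f) (whiskerL h (whiskerR be f))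
  = vcomp (whiskerR (whiskerL h be) f) (assoc h g f).
Proof. apply (assoc_nat (baxioms B)). Qed.

Lemma is_inverse_sym {a b : ob B} {f g : hom a b} (x : cell f g) (x' : cell g f) :
  is_inverse x x' -> is_inverse x' x.
Proof. intros [H1 H2]. split; assumption. Qed.

Lemma is_inverse_vcomp {a b : ob B} {f g h : hom a b} (x : cell f g) (x' : cell g f)
  (y : cell g h) (y' : cell h g) :
  is_inverse x x' -> is_inverse y y' -> is_inverse (vcomp y x) (vcomp x' y').
Proof.
  intros [Hx1 Hx2] [Hy1 Hy2]. split.
  - rewrite vcompA, <- (vcompA y y' x'), Hy1, vcomp_idr. exact Hx1.
  - rewrite vcompA, <- (vcompA x' x y), Hx2, vcomp_idr. exact Hy2.
Qed.

Lemma is_inverse_whiskerR {a b c : ob B} {g g' : hom b c} (x : cell g g') (x' : cell g' g)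
  (h : hom a b) :
  is_inverse x x' -> is_inverse (whiskerR x h) (whiskerR x' h).
Proof.
  intros [H1 H2]. split; rewrite <- whiskerR_vcomp; [rewrite H1 | rewrite H2];
    apply whiskerR_id2.
Qed.

Lemma vcomp_inverse_cancel_l {a b : ob B} {f g h : hom a b} (x : cell g h) (x' : cell h g)
  (X Y : cell f g) :
  is_inverse x x' -> vcomp x X = vcomp x Y -> X = Y.
Proof.
  intros [Hx _] E.
  rewrite <- (vcomp_idl X), <- (vcomp_idl Y), <- Hx, <- !vcompA, E. reflexivity.
Qed.

Lemma vcomp_inverse_solve_r {a b : ob B} {f g h : hom a b} (x : cell f g) (x' : cell g f)
  (X : cell g h) (Y : cell f h) :
  is_inverse x x' -> vcomp X x = Y -> X = vcomp Y x'.
Proof.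
  intros [_ Hx] E. rewrite <- E, <- vcompA, Hx, vcomp_idr. reflexivity.
Qed.

Lemma assoc_inv_whiskerL_whiskerL {a b c d : ob B} (h : hom c d) (g : hom b c)
  {f f' : hom a b} (al : cell f f') :
  vcomp (assoc_inv h g f') (whiskerL (comp h g) al)
  = vcomp (whiskerL h (whiskerL g al)) (assoc_inv h g f).
Proof.
  pose proof (assoc_iso (baxioms B) _ _ _ _ h g f) as Hf.
  pose proof (assoc_iso (baxioms B) _ _ _ _ h g f') as Hf'.
  apply (vcomp_inverse_cancel_l (assoc h g f') (assoc_inv h g f') _ _ Hf').
  rewrite !vcompA, (proj2 Hf'), vcomp_idl, assoc_whiskerL_whiskerL, <- vcompA,
    (proj2 Hf), vcomp_idr.
  reflexivity.
Qed.

(* [X] is recovered from [whiskerL u X] by whiskering with [w] and conjugating by [rho]. *)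
Lemma whiskerL_inj {x y z : ob B} (u : hom x y) (w : hom y x)
  (rho : cell (comp w u) (id1 x)) (rho' : cell (id1 x) (comp w u)) (h h' : hom z x)
  (X Y : cell h h') :
  is_inverse rho rho' -> whiskerL u X = whiskerL u Y -> X = Y.
Proof.
  intros Hr E.
  assert (recover : forall Z : cell h h',
    Z = vcomp (lunit h') (vcomp (whiskerR rho h') (vcomp (assoc w u h')
          (vcomp (whiskerL w (whiskerL u Z))
            (vcomp (assoc_inv w u h) (vcomp (whiskerR rho' h) (lunit_inv h))))))).
  { intro Z.
    rewrite (vcompA _ (whiskerL w (whiskerL u Z))), assoc_whiskerL_whiskerL, <- vcompA,
      (vcompA _ (assoc_inv w u h)), (proj2 (assoc_iso (baxioms B) _ _ _ _ w u h)), vcomp_idl,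
      (vcompA _ (whiskerL (comp w u) Z)), whisker_exchange, <- vcompA,
      (vcompA _ (whiskerR rho' h)), <- whiskerR_vcomp, (proj2 Hr), whiskerR_id2, vcomp_idl,
      vcompA.
    unfold whiskerL. rewrite (lunit_nat (baxioms B)), <- vcompA,
      (proj2 (lunit_iso (baxioms B) _ _ h)), vcomp_idr.
    reflexivity. }
  rewrite (recover X), (recover Y), E. reflexivity.
Qed.

End BicategoryFacts.

Section CounitTransport.
Context {B : Bicat} {A A' X X' : ob B} (h : hom A A') (k : hom X X')
  (u : hom X A) (u' : hom X' A') (nu : cell (comp h u) (comp u' k))
  (nu_inv : cell (comp u' k) (comp h u)).
Hypothesis nu_iso : is_inverse nu nu_inv.

Definition counit_transpose {sg : hom A X} {sg' : hom A' X'}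
  (e' : cell (comp u' sg') (id1 A')) (x : cell (comp k sg) (comp sg' h)) :
  cell (comp u' (comp k sg)) (comp (id1 A') h) :=
  vcomp (whiskerR e' h) (vcomp (assoc u' sg' h) (whiskerL u' x)).

Definition counit_transport {sg : hom A X} (e : cell (comp u sg) (id1 A)) :
  cell (comp u' (comp k sg)) (comp (id1 A') h) :=
  vcomp (id_nat h) (vcomp (whiskerL h e)
    (vcomp (assoc_inv h u sg) (vcomp (whiskerR nu_inv sg) (assoc u' k sg)))).

Lemma counit_transpose_vcomp {sg : hom A X} {sg' : hom A' X'} {ta : hom A X}
  (e' : cell (comp u' sg') (id1 A')) (y : cell (comp k ta) (comp sg' h))
  (x : cell (comp k sg) (comp k ta)) :
  counit_transpose e' (vcomp y x) = vcomp (counit_transpose e' y) (whiskerL u' x).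
Proof. unfold counit_transpose. rewrite whiskerL_vcomp, !vcompA. reflexivity. Qed.

Lemma counit_transpose_whiskerR {sg : hom A X} {sg' rh' : hom A' X'}
  (r' : cell (comp u' rh') (id1 A')) (t' : cell sg' rh') (x : cell (comp k sg) (comp sg' h)) :
  counit_transpose r' (vcomp (whiskerR t' h) x)
  = counit_transpose (vcomp r' (whiskerL u' t')) x.
Proof.
  unfold counit_transpose.
  rewrite whiskerL_vcomp, (vcompA _ (whiskerL u' (whiskerR t' h))),
    assoc_whiskerL_whiskerR, !vcompA, <- whiskerR_vcomp.
  reflexivity.
Qed.

Lemma counit_transpose_inj {sg : hom A X} {rh' : hom A' X'} (w' : hom A' X')
  (rho : cell (comp w' u') (id1 X')) (rho' : cell (id1 X') (comp w' u'))
  (r' : cell (comp u' rh') (id1 A')) (r'_inv : cell (id1 A') (comp u' rh'))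
  (x y : cell (comp k sg) (comp rh' h)) :
  is_inverse rho rho' -> is_inverse r' r'_inv ->
  counit_transpose r' x = counit_transpose r' y -> x = y.
Proof.
  intros Hrho Hr' E. unfold counit_transpose in E.
  apply (whiskerL_inj u' w' rho rho' _ _ _ _ Hrho).
  apply (vcomp_inverse_cancel_l _ _ _ _ (assoc_iso (baxioms B) _ _ _ _ u' rh' h)).
  exact (vcomp_inverse_cancel_l _ _ _ _ (is_inverse_whiskerR _ _ h Hr') E).
Qed.

Lemma counit_transpose_of_mod_square {sg : hom A X} {sg' : hom A' X'}
  (e : cell (comp u sg) (id1 A)) (e' : cell (comp u' sg') (id1 A'))
  (n : cell (comp k sg) (comp sg' h)) :
  mod_square e e' (comp_nat n nu) (id_nat h) ->
  counit_transpose e' n = counit_transport e.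
Proof.
  unfold mod_square, comp_nat, counit_transpose, counit_transport. intro Hmod.
  pose proof (assoc_iso (baxioms B) _ _ _ _ h u sg) as Hhu.
  pose proof (assoc_iso (baxioms B) _ _ _ _ u' k sg) as Huk.
  assert (Hconj : is_inverse
      (vcomp (assoc_inv u' k sg) (vcomp (whiskerR nu sg) (assoc h u sg)))
      (vcomp (assoc_inv h u sg) (vcomp (whiskerR nu_inv sg) (assoc u' k sg)))).
  { rewrite (vcompA (assoc u' k sg)). apply is_inverse_vcomp; [| apply is_inverse_sym, Huk].
    apply is_inverse_vcomp; [exact Hhu | exact (is_inverse_whiskerR _ _ sg nu_iso)]. }
  rewrite (vcompA _ (whiskerL h e)).
  apply (vcomp_inverse_solve_r _ _ _ _ Hconj).
  rewrite <- Hmod, !vcompA. reflexivity.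
Qed.

Lemma counit_transport_whiskerL {sg rh : hom A X} (r : cell (comp u rh) (id1 A))
  (t : cell sg rh) :
  vcomp (counit_transport r) (whiskerL u' (whiskerL k t))
  = counit_transport (vcomp r (whiskerL u t)).
Proof.
  unfold counit_transport.
  rewrite <- !vcompA, assoc_whiskerL_whiskerL,
    (vcompA _ (whiskerL (comp u' k) t)), whisker_exchange, <- vcompA,
    (vcompA _ (whiskerL (comp h u) t)), assoc_inv_whiskerL_whiskerL, <- vcompA,
    (vcompA _ (whiskerL h (whiskerL u t))), <- whiskerL_vcomp.
  reflexivity.
Qed.

Lemma mod_square_of_counits {sg rh : hom A X} {sg' rh' : hom A' X'}
  (n1 : cell (comp k sg) (comp sg' h)) (n2 : cell (comp k rh) (comp rh' h))
  (e : cell (comp u sg) (id1 A)) (e' : cell (comp u' sg') (id1 A'))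
  (r : cell (comp u rh) (id1 A)) (r' : cell (comp u' rh') (id1 A'))
  (r'_inv : cell (id1 A') (comp u' rh')) (w' : hom A' X')
  (rho : cell (comp w' u') (id1 X')) (rho' : cell (id1 X') (comp w' u'))
  (t : cell sg rh) (t' : cell sg' rh') :
  mod_square e e' (comp_nat n1 nu) (id_nat h) ->
  mod_square r r' (comp_nat n2 nu) (id_nat h) ->
  vcomp r (whiskerL u t) = e -> vcomp r' (whiskerL u' t') = e' ->
  is_inverse r' r'_inv -> is_inverse rho rho' ->
  mod_square t t' n1 n2.
Proof.
  intros He Hr Ht Ht' Hr'_iso Hrho. unfold mod_square.
  apply (counit_transpose_inj w' rho rho' r' r'_inv _ _ Hrho Hr'_iso).
  rewrite counit_transpose_whiskerR, Ht', (counit_transpose_of_mod_square e e' n1 He),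
    counit_transpose_vcomp, (counit_transpose_of_mod_square r r' n2 Hr),
    counit_transport_whiskerL, Ht.
  reflexivity.
Qed.

End CounitTransport.

Theorem lemma3p2 (B : Bicat) (s : SymOps B) (HS : SymAxioms s)
  (t : forall a b, cell (Rd s a b) (R s b a))
  (Ht : forall a b, vcomp (syl s b a) (whiskerL (R s a b) (t a b)) = eps s a b) :
  forall a a' b b' (f : hom a a') (g : hom b b'),
    mod_square (t a b) (t a' b') (Rdn s f g) (Rn s g f).
Proof.
  intros a a' b b' f g.
  apply (mod_square_of_counits (tens1 s g f) (tens1 s f g) (R s a b) (R s a' b')
           (Rn s f g) (Rn_inv s f g) (Rn_iso HS _ _ _ _ f g)
           (Rdn s f g) (Rn s g f) (eps s a b) (eps s a' b') (syl s b a) (syl s b' a')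
           (syl_inv s b' a') (R s b' a') (syl s a' b') (syl_inv s a' b') (t a b) (t a' b')).
  - apply (eps_mod HS).
  - apply (syl_mod HS).
  - apply Ht.
  - apply Ht.
  - apply (syl_iso HS).
  - apply (syl_iso HS).
Qed.
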